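(* Let $p\in[1,\infty)$, $w$ a weight sequence, and $A\subset L_{p,w}$ such that $\forall\varepsilon>0\ \exists N\in\mathbb{N}\ \forall a\in A\ \forall i\ge N:\ T_i(a)<\varepsilon$. Then the same holds for $A-A=\{a-b:a,b\in A\}$, i.e. $\forall\varepsilon>0\ \exists N\in\mathbb{N}\ \forall a,b\in A\ \forall i\ge N:\ T_i(a-b)<\varepsilon$.
   Context: A weight sequence is a sequence $w=(w_i)$ of positive reals with $w_1=1\ge w_2\ge\dots$, $w_i\to0$, and $\sum_i w_i=+\infty$. For a real sequence $a$, $\|a\|_{p,w}=\sup_{\sigma}\big(\sum_{i=1}^\infty |a_{\sigma_i}|^p w_i\big)^{1/p}$ over all permutations $\sigma$ of $\mathbb{N}$; $L_{p,w}$ is the set of real sequences with finite norm. $T_i(a)=\|(a_{i+1},a_{i+2},\dots)\|_{p,w}^p$ (the $p$-th power of the norm of the $i$-th tail). *)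

(* Sequences are 0-indexed: a k stands for a_{k+1}. *)
From HB Require Import structures.
From mathcomp Require Import all_boot all_order all_algebra.
From mathcomp Require Import all_classical all_reals all_analysis.
Set Implicit Arguments. Unset Strict Implicit. Unset Printing Implicit Defensive.
Import Order.TTheory GRing.Theory Num.Theory.
Local Open Scope classical_set_scope.
Local Open Scope ring_scope.

Definition weight_seq (R : realType) (w : nat -> R) : Prop :=
  [/\ w 0%N = 1,
      (forall k, 0 < w k),
      (forall k, w k.+1 <= w k),
      w @ \oo --> 0
    & (\sum_(k <oo) (w k)%:E = +oo)%E].

Definition lpw_pow (R : realType) (p : R) (w : nat -> R) (a : nat -> R) : \bar R :=
  ereal_sup [set (\sum_(k <oo) ((`|a (s k)| `^ p * w k)%:E))%E
            | s in [set s : nat -> nat | bijective s]].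

Definition lpw_norm (R : realType) (p : R) (w : nat -> R) (a : nat -> R) : \bar R :=
  (lpw_pow p w a `^ p^-1)%E.

Definition in_Lpw (R : realType) (p : R) (w : nat -> R) (a : nat -> R) : Prop :=
  (lpw_norm p w a < +oo)%E.

(* T_i(a) = || (a_{i+1}, a_{i+2}, ...) ||^p ; in 0-indexing the tail drops the first i entries *)
Definition tailT (R : realType) (p : R) (w : nat -> R) (i : nat) (a : nat -> R) : \bar R :=
  lpw_pow p w (fun k => a (k + i)%N).

(** Pointwise, [|x - y|^p <= 2^p (|x|^p + |y|^p)]; summing along any rearrangement
    and taking suprema gives [T_i(a - b) <= 2^p (T_i(a) + T_i(b))], so a uniform
    bound on the tails of the members of [A] transfers to [A - A]. *)
From HB Require Import structures.
From mathcomp Require Import all_boot all_order all_algebra.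
From mathcomp Require Import all_classical all_reals all_analysis.
From mathcomp Require Import ring.
Import Order.TTheory GRing.Theory Num.Theory.
Local Open Scope classical_set_scope.
Local Open Scope ring_scope.

Lemma powR_normB_le (R : realType) (p x y : R) : 0 <= p ->
  `|x - y| `^ p <= 2 `^ p * (`|x| `^ p + `|y| `^ p).
Proof.
move=> p0; wlog le_yx : x y / `|y| <= `|x|.
  move=> sym; have [/sym//|/ltW /sym] := leP `|y| `|x|.
  by rewrite distrC [_ + `|_| `^ _]addrC.
have le_normB_2x : `|x - y| <= 2 * `|x|.
  by rewrite (le_trans (ler_normB x y)) // mulr2n mulrDl mul1r lerD.
rewrite (le_trans (ge0_ler_powR p0 _ _ le_normB_2x)) ?nnegrE ?mulr_ge0 //.
by rewrite powRM // ler_wpM2l ?powR_ge0 // lerDl powR_ge0.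
Qed.

Lemma lpw_powB_le (R : realType) (p : R) (w : nat -> R) (a b : nat -> R) :
  0 <= p -> (forall k, 0 <= w k) ->
  (lpw_pow p w (fun k => (a k - b k)%R) <=
     (2 `^ p)%:E * (lpw_pow p w a + lpw_pow p w b))%E.
Proof.
move=> p0 w0; apply: ge_ereal_sup => _ [s bij_s <-].
have term_ge0 (x : R) k : (0 <= (`|x| `^ p * w k)%:E)%E.
  by rewrite lee_fin mulr_ge0 ?powR_ge0.
apply: (@le_trans _ _ ((2 `^ p)%:E *
   (\sum_(k <oo) (`|a (s k)| `^ p * w k)%:E +
    \sum_(k <oo) (`|b (s k)| `^ p * w k)%:E))%E).
  rewrite -nneseriesD // -nneseriesZl => [|k _]; last by rewrite adde_ge0.
  apply: lee_nneseries => [k _ _|k _]; first exact: term_ge0.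
  rewrite -EFinD -EFinM lee_fin -mulrDl mulrA ler_wpM2r //.
  exact: powR_normB_le.
rewrite lee_wpmul2l ?lee_fin ?powR_ge0 // leeD //; apply: ereal_sup_ubound;
  by exists s.
Qed.

Theorem mainTheorem11 (R : realType) (p : R) (w : nat -> R) (A : set (nat -> R)) :
  1 <= p -> weight_seq w -> (forall a, A a -> in_Lpw p w a) ->
  (forall eps : R, 0 < eps -> exists N : nat, forall a, A a ->
      forall i : nat, (N <= i)%N -> (tailT p w i a < eps%:E)%E) ->
  forall eps : R, 0 < eps -> exists N : nat, forall a b, A a -> A b ->
      forall i : nat, (N <= i)%N -> (tailT p w i (fun k => (a k - b k)%R) < eps%:E)%E.
Proof.
move=> p1 [_ w_gt0 _ _ _] _ unif_tails eps eps_gt0.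
have p0 : 0 <= p by apply: le_trans p1.
have pow2p_gt0 : 0 < 2 `^ p by rewrite powR_gt0.
set e := eps / (2 * 2 `^ p).
have [N tailsN] := unif_tails e (divr_gt0 eps_gt0 (mulr_gt0 (ltr0Sn _ 1) pow2p_gt0)).
exists N => a b Aa Ab i le_Ni.
have w_ge0 k : 0 <= w k by exact: ltW.
apply: (le_lt_trans (@lpw_powB_le _ p w (fun k => a (k + i)%N) (fun k => b (k + i)%N)
  p0 w_ge0)).
have -> : eps%:E = ((2 `^ p)%:E * (e + e)%:E)%E.
  by rewrite -EFinM; congr EFin; rewrite /e; field; rewrite gt_eqF.
by rewrite lte_pmul2l ?lte_fin // EFinD lteD ?tailsN.
Qed.
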